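(* Let $P(z)=\sum_{k=0}^mc_ke^{\alpha_kz}$ with $c_k\ge0$, $\alpha_k\in\mathbb{R}$ and $\max_k|\alpha_k|\le\omega$, where $\omega>0$. Then for every $t\in\mathbb{R}$ and every $\tau\in\mathbb{C}$ with $|\tau-t|\le\frac{1}{5\omega}$, \[ \tfrac34P(t)\le|P(\tau)|\le\tfrac54P(t). \]
   Context: Such $P$ is called an exponential polynomial with real exponents of width at most $\omega$. *)

From Stdlib Require Import Reals.
From Coquelicot Require Import Coquelicot.
Open Scope R_scope.

Definition cexp (z : C) : C :=
  (exp (Re z) * cos (Im z), exp (Re z) * sin (Im z)).

Definition expoly (m : nat) (c alpha : nat -> R) (z : C) : C :=
  sum_n (fun k => RtoC (c k) * cexp (RtoC (alpha k) * z))%C m.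

Definition expoly_R (m : nat) (c alpha : nat -> R) (t : R) : R :=
  sum_f_R0 (fun k => c k * exp (alpha k * t)) m.

(* Write tau = t + h with |h| <= 1/(5 omega).  Each term moves by
   c_k e^(alpha_k t) (e^(alpha_k h) - 1), and |alpha_k h| <= 1/5 gives
   |e^w - 1| <= 1/4, so |P(tau) - P(t)| <= P(t)/4 by the triangle inequality;
   the positivity of the c_k is what lets the individual errors add up to a
   fraction of P(t) rather than of sum_k |c_k| e^(alpha_k t). *)

From Stdlib Require Import Reals Lra.
From Coquelicot Require Import Coquelicot.
Open Scope R_scope.

Lemma cexp_add (z w : C) : cexp (z + w) = (cexp z * cexp w)%C.
Proof.
  destruct z as [x y], w as [u v]; unfold cexp, Cmult, Cplus; simpl.
  rewrite exp_plus, cos_plus, sin_plus.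
  apply injective_projections; simpl; ring.
Qed.

Lemma cexp_RtoC (x : R) : cexp (RtoC x) = RtoC (exp x).
Proof.
  unfold cexp, RtoC; simpl.
  rewrite cos_0, sin_0, Rmult_1_r, Rmult_0_r; reflexivity.
Qed.

Lemma Rabs_sin_le (u : R) : Rabs (sin u) <= Rabs u.
Proof.
  assert (Hnonneg : forall v, 0 <= v -> Rabs (sin v) <= v).
  { intros v Hv.
    destruct (Rle_lt_dec v 1) as [Hv1 | Hv1].
    - pose proof PI2_1.
      rewrite Rabs_pos_eq by (apply sin_ge_0; lra).
      destruct (Req_dec v 0) as [-> | Hv0].
      + rewrite sin_0; lra.
      + left; apply sin_lt_x; lra.
    - pose proof (SIN_bound v).
      apply Rabs_le; lra. }
  destruct (Rle_lt_dec 0 u) as [Hu | Hu].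
  - rewrite (Rabs_pos_eq u Hu); auto.
  - rewrite <- Rabs_Ropp, <- sin_neg, (Rabs_left u Hu).
    apply Hnonneg; lra.
Qed.

Lemma one_sub_cos_le (y : R) : 1 - cos y <= y ^ 2 / 2.
Proof.
  replace y with (2 * (y / 2)) at 1 by field.
  rewrite cos_2a_sin.
  pose proof (Rsqr_le_abs_1 _ _ (Rabs_sin_le (y / 2))) as Hsin.
  unfold Rsqr in Hsin.
  nra.
Qed.

Lemma Rabs_exp_sub_1_le (x r : R) :
  Rabs x <= r -> r < 1 -> (1 - r) * Rabs (exp x - 1) <= Rabs x.
Proof.
  intros Hxr Hr.
  pose proof (Rle_trans _ _ _ (Rabs_pos x) Hxr) as Hr0.
  pose proof (exp_ineq1_le x) as Hlow.
  assert (Hup : exp x * (1 - x) <= 1).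
  { pose proof (exp_ineq1_le (- x)) as Hneg.
    pose proof (exp_pos x).
    assert (Hinv : exp x * exp (- x) = 1)
      by (rewrite <- exp_plus, Rplus_opp_r; apply exp_0).
    nra. }
  destruct (Rle_lt_dec 0 x) as [Hx | Hx].
  - apply Rabs_le_between in Hxr.
    rewrite Rabs_pos_eq by lra.
    rewrite Rabs_pos_eq by exact Hx.
    nra.
  - rewrite (Rabs_left x Hx).
    rewrite Rabs_left1 by (pose proof (exp_increasing x 0 Hx); rewrite exp_0 in *; lra).
    nra.
Qed.

Lemma Cmod_cexp_sub_1_sqr (w : C) :
  Cmod (cexp w - 1) ^ 2 = (exp (Re w) - 1) ^ 2 + 2 * exp (Re w) * (1 - cos (Im w)).
Proof.
  rewrite Cmod2_alt.
  destruct w as [x y]; unfold cexp, Cminus, Cplus, Copp; simpl.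
  pose proof (sin2_cos2 y) as Hpyth; unfold Rsqr in Hpyth.
  replace ((exp x * sin y + - 0) * ((exp x * sin y + - 0) * 1))
    with (exp x ^ 2 * (sin y * sin y)) by ring.
  replace (sin y * sin y) with (1 - cos y * cos y) by lra.
  ring.
Qed.

Lemma Cmod_cexp_sub_1_le (w : C) : Cmod w <= 1 / 5 -> Cmod (cexp w - 1) <= 1 / 4.
Proof.
  intros Hw.
  set (x := Re w); set (y := Im w).
  assert (Hxy : x ^ 2 + y ^ 2 <= 1 / 25).
  { unfold x, y; rewrite <- Cmod2_alt.
    pose proof (Cmod_ge_0 w); nra. }
  assert (Hx_small : Rabs x <= 1 / 5) by exact (Rle_trans _ _ _ (re_le_Cmod w) Hw).
  assert (Hx : 4 / 5 * Rabs (exp x - 1) <= Rabs x).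
  { replace (4 / 5) with (1 - 1 / 5) by field.
    apply Rabs_exp_sub_1_le; [exact Hx_small | lra]. }
  assert (Hexp_sqr : (exp x - 1) ^ 2 <= 25 / 16 * x ^ 2).
  { rewrite <- (pow2_abs (exp x - 1)), <- (pow2_abs x).
    pose proof (Rabs_pos (exp x - 1)); nra. }
  assert (Hexp : exp x <= 5 / 4).
  { assert (Rabs (exp x - 1) <= 1 / 4) as Hdev%Rabs_le_between by lra.
    lra. }
  (* |e^w - 1|^2 <= 25/16 x^2 + 5/4 y^2 <= 25/16 |w|^2 <= 1/16 *)
  pose proof (one_sub_cos_le y) as Hcos.
  pose proof (exp_pos x).
  pose proof (Cmod_cexp_sub_1_sqr w) as Hsqr; fold x y in Hsqr.
  pose proof (Cmod_ge_0 (cexp w - 1)).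
  nra.
Qed.

Lemma Cmod_exp_term_shift_le (c a omega t : R) (tau : C) :
  0 < omega -> 0 <= c -> Rabs a <= omega -> Cmod (tau - RtoC t) <= 1 / (5 * omega) ->
  Cmod (RtoC c * cexp (RtoC a * tau) - RtoC (c * exp (a * t))) <= 1 / 4 * (c * exp (a * t)).
Proof.
  intros Homega Hc Ha Htau.
  assert (Hsmall : Cmod (RtoC a * (tau - RtoC t)) <= 1 / 5).
  { rewrite Cmod_mult, Cmod_R.
    replace (1 / 5) with (omega * (1 / (5 * omega))) by (field; lra).
    apply Rmult_le_compat; auto using Rabs_pos, Cmod_ge_0. }
  replace (RtoC a * tau)%C with (RtoC (a * t) + RtoC a * (tau - RtoC t))%C
    by (rewrite RtoC_mult; ring).
  rewrite cexp_add, cexp_RtoC.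
  replace (RtoC c * (RtoC (exp (a * t)) * cexp (RtoC a * (tau - RtoC t)))
           - RtoC (c * exp (a * t)))%C
    with (RtoC (c * exp (a * t)) * (cexp (RtoC a * (tau - RtoC t)) - 1))%C
    by (rewrite RtoC_mult; ring).
  rewrite Cmod_mult, Cmod_R, Rabs_pos_eq by (pose proof (exp_pos (a * t)); nra).
  rewrite Rmult_comm.
  apply Rmult_le_compat_r.
  - pose proof (exp_pos (a * t)); nra.
  - exact (Cmod_cexp_sub_1_le _ Hsmall).
Qed.

Lemma Cmod_sum_n_sub_le (z : nat -> C) (r : nat -> R) (n : nat) :
  Cmod (sum_n z n - RtoC (sum_f_R0 r n)) <= sum_f_R0 (fun k => Cmod (z k - RtoC (r k))) n.
Proof.
  induction n as [| n IH].
  - rewrite sum_O; simpl; lra.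
  - rewrite sum_Sn; simpl.
    change plus with Cplus.
    rewrite RtoC_plus.
    replace (sum_n z n + z (S n) - (RtoC (sum_f_R0 r n) + RtoC (r (S n))))%C
      with ((sum_n z n - RtoC (sum_f_R0 r n)) + (z (S n) - RtoC (r (S n))))%C by ring.
    eapply Rle_trans; [apply Cmod_triangle | lra].
Qed.

Lemma Cmod_near_real_bounds (z : C) (s eps : R) :
  0 < eps -> Cmod (z - RtoC s) <= eps * s ->
  (1 - eps) * s <= Cmod z /\ Cmod z <= (1 + eps) * s.
Proof.
  intros Heps Hz.
  assert (Hs : 0 <= s) by (pose proof (Cmod_ge_0 (z - RtoC s)); nra).
  assert (Hmod_s : Cmod (RtoC s) = s) by (rewrite Cmod_R; apply Rabs_pos_eq, Hs).
  split.
  - pose proof (Cmod_triangle (RtoC s - z) z) as Htri.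
    replace (RtoC s - z + z)%C with (RtoC s) in Htri by ring.
    replace (RtoC s - z)%C with (- (z - RtoC s))%C in Htri by ring.
    rewrite Cmod_opp in Htri; lra.
  - pose proof (Cmod_triangle (z - RtoC s) (RtoC s)) as Htri.
    replace (z - RtoC s + RtoC s)%C with z in Htri by ring.
    lra.
Qed.

Theorem lemma3p8 (m : nat) (c alpha : nat -> R) (omega : R) :
  0 < omega ->
  (forall k, (k <= m)%nat -> 0 <= c k) ->
  (forall k, (k <= m)%nat -> Rabs (alpha k) <= omega) ->
  forall (t : R) (tau : C),
    Cmod (tau - RtoC t)%C <= 1 / (5 * omega) ->
    3 / 4 * expoly_R m c alpha t <= Cmod (expoly m c alpha tau) /\
    Cmod (expoly m c alpha tau) <= 5 / 4 * expoly_R m c alpha t.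
Proof.
  intros Homega Hc Halpha t tau Htau.
  assert (Hdev : Cmod (expoly m c alpha tau - RtoC (expoly_R m c alpha t))
                 <= 1 / 4 * expoly_R m c alpha t).
  { unfold expoly, expoly_R.
    eapply Rle_trans; [apply Cmod_sum_n_sub_le |].
    rewrite scal_sum.
    apply sum_Rle; intros k Hk.
    rewrite (Rmult_comm _ (1 / 4)).
    apply Cmod_exp_term_shift_le with omega; auto. }
  replace (3 / 4) with (1 - 1 / 4) by field.
  replace (5 / 4) with (1 + 1 / 4) by field.
  apply Cmod_near_real_bounds; lra.
Qed.
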